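(* Let $N\ge1$ and $p\in(0,1)$ with $\overline L:=[|\log p|/\log 2]$ and $\overline M:=[Np|\log p|/(\log 2)^2]$ satisfying $1\le\overline L\le\overline M$. Let $P^{\mathcal R-\mathcal P}_{N,\overline M,\overline L}$ be the distribution on $N\times\overline M$ binary matrices $C=(c_{i,a})$ with independent rows, each uniformly distributed among the binary vectors of length $\overline M$ with exactly $\overline L$ ones. For a variable $i$ and an integer $n\ge0$, let $\mathcal E^n_i(C)=1$ if $\sum_{j\ne i}\sum_{1\le a<b\le\overline M}c_{i,a}c_{i,b}c_{j,b}c_{j,a}>n$ and $\mathcal E^n_i(C)=0$ otherwise. Then $$\sum_{C}P^{\mathcal R-\mathcal P}_{N,\overline M,\overline L}(C)\,\mathcal E^n_i(C)\ \le\ \frac{N\overline L^6}{\overline M^3}+\Bigl(\frac{N\overline L^4}{\overline M^2}\Bigr)^{n+1}.$$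
   Context: $[x]$ denotes the integer part of $x$ and $\log$ the natural logarithm. $\mathcal E^n_i(C)$ indicates that variable $i$ lies on more than $n$ cycles of length $4$ in the bipartite variable–test graph of $C$. *)

From HB Require Import structures.
From mathcomp Require Import all_boot all_order all_algebra.
From mathcomp Require Import reals exp.
Set Implicit Arguments. Unset Strict Implicit. Unset Printing Implicit Defensive.
Import Order.TTheory GRing.Theory Num.Theory.
Local Open Scope ring_scope.

Definition bmatrix (N M : nat) := {ffun 'I_N -> {ffun 'I_M -> bool}}.

Definition weight_set (M L : nat) : {set {ffun 'I_M -> bool}} :=
  [set r : {ffun 'I_M -> bool} | #|[set a | r a]| == L].

Definition PRP {R : realType} (N M L : nat) (C : bmatrix N M) : R :=
  \prod_(i < N) (if C i \in weight_set M L then (#|weight_set M L|%:R)^-1 else 0).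

Definition cycles4 (N M : nat) (C : bmatrix N M) (i : 'I_N) : nat :=
  \sum_(j < N | j != i) \sum_(a < M) \sum_(b < M | (a < b)%N)
     (C i a && C i b && C j b && C j a : nat).

Definition Eni {R : realType} (N M : nat) (n : nat) (i : 'I_N) (C : bmatrix N M) : R :=
  if (n < cycles4 C i)%N then 1 else 0.

(* Let d_j be the overlap of rows i and j (the number of columns where both are 1).
   The number of 4-cycles through i is the sum over j <> i of 'C(d_j, 2), so if it
   exceeds n then either some d_j >= 3, or at least n + 1 rows j have d_j = 2.
   Given row i, the other rows are independent and uniform on the weight-L vectors, and
   a union bound over the k-subsets of row i gives P(d_j >= k) <= (L^2 / M)^k.  Summing
   over j, resp. over the (n+1)-sets of rows, bounds the two events by N L^6 / M^3 and
   'C(N, n+1) (L^4 / M^2)^(n+1) <= (N L^4 / M^2)^(n+1). *)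

From mathcomp Require Import all_boot all_order all_algebra.
From mathcomp Require Import zify.
From mathcomp Require Import reals exp.
Set Implicit Arguments. Unset Strict Implicit. Unset Printing Implicit Defensive.
Import Order.TTheory GRing.Theory Num.Theory.

Lemma card_supersets (T : finType) (K : {set T}) L : #|K| <= L ->
  #|[set S : {set T} | (#|S| == L) && (K \subset S)]| = 'C(#|T| - #|K|, L - #|K|).
Proof.
move=> KL.
have injD : {in [set S : {set T} | (#|S| == L) && (K \subset S)] &,
              injective (fun S => S :\: K)}.
  move=> S1 S2; rewrite !inE => /andP[_ KS1] /andP[_ KS2] eqD.
  by rewrite -(setID S1 K) -(setID S2 K) (setIidPr KS1) (setIidPr KS2) eqD.
have -> : #|T| - #|K| = #|~: K| by rewrite -(cardsC K) addKn.
rewrite -cards_draws -(card_in_imset injD); apply: eq_card => S'.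
rewrite inE; apply/imsetP/andP => [[S] | [S'K /eqP cardS']].
  rewrite inE => /andP[/eqP cardS KS] ->.
  by rewrite cardsD (setIidPr KS) cardS setDE subsetIr eqxx.
have dS'K : [disjoint S' & K] by rewrite disjoints_subset.
exists (S' :|: K); last by rewrite setDUl setDv setU0 (setDidPl dS'K).
by rewrite inE subsetUr cardsU (disjoint_setI0 dS'K) cards0 subn0 cardS' subnK ?eqxx.
Qed.

Lemma exists_subset_card (T : finType) (B : {set T}) k : k <= #|B| ->
  exists2 K : {set T}, K \subset B & #|K| = k.
Proof.
move=> kB; have : 0 < #|[set K : {set T} | K \subset B & #|K| == k]|.
  by rewrite cards_draws bin_gt0.
by case/card_gt0P => K; rewrite inE => /andP[KB /eqP cardK]; exists K.
Qed.

Lemma card_meet_geq_leq_sum (T U : finType) (A : {set T}) (B : U -> {set T})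
    (D : pred U) k :
  #|[set x | D x && (k <= #|A :&: B x|)]| <=
    \sum_(K : {set T} | (K \subset A) && (#|K| == k)) #|[set x | D x && (K \subset B x)]|.
Proof.
under eq_bigr => K _ do rewrite -sum1_card.
rewrite -sum1_card (exchange_big_dep predT) //= big_mkcond /=.
apply: leq_sum => x _; case: ifP => //; rewrite inE => /andP[Dx kAB].
have [K KAB cardK] := exists_subset_card kAB.
rewrite (bigD1 K) ?leq_addr //= inE Dx cardK eqxx (subset_trans KAB (subsetIr _ _)).
by rewrite (subset_trans KAB (subsetIl _ _)).
Qed.

Lemma ffact_leq_expn n m : n ^_ m <= n ^ m.
Proof.
elim: m => [|m IHm]; first by rewrite ffactn0 expn0.
by rewrite ffactnSr expnS mulnC leq_mul ?leq_subr.
Qed.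

Lemma bin_leq_expn n k : 'C(n, k) <= n ^ k.
Proof.
apply: leq_trans (ffact_leq_expn n k); rewrite -bin_ffact.
by rewrite leq_pmulr ?fact_gt0.
Qed.

Lemma mul_bin_subS_leq M L j : j < L -> L <= M ->
  'C(M - j.+1, L - j.+1) * M <= L * 'C(M - j, L - j).
Proof.
move=> jL LM.
have diag := mul_bin_diag (M - j) (L - j.+1).
rewrite (_ : (M - j).-1 = M - j.+1) 1?(_ : (L - j.+1).+1 = L - j) in diag; try lia.
rewrite -(@leq_pmul2l (M - j)) ?subn_gt0 ?(leq_trans jL) //.
rewrite mulnA diag mulnAC [X in _ <= X]mulnA leq_mul //.
nia.
Qed.

(* 'C(M - k, L - k) / 'C(M, L) = L ^_ k / M ^_ k, and (L - j) / (M - j) <= L / M. *)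
Lemma mul_bin_sub_expn_leq M L k : k <= L -> L <= M ->
  'C(M - k, L - k) * M ^ k <= L ^ k * 'C(M, L).
Proof.
move=> kL LM; elim: k kL => [|k IHk] kL; first by rewrite !subn0 expn0 muln1 mul1n.
rewrite expnS mulnA.
apply: leq_trans (_ : L * 'C(M - k, L - k) * M ^ k <= _).
  by rewrite leq_mul // mul_bin_subS_leq.
by rewrite expnS -!mulnA leq_mul // IHk // ltnW.
Qed.

Section Rows.
Variable M : nat.
Local Notation row := {ffun 'I_M -> bool}.

Definition ones (x : row) : {set 'I_M} := [set a | x a].

Definition overlap (x y : row) : nat := #|ones x :&: ones y|.

Lemma ones_inj : injective ones.
Proof. by move=> x y /setP eq_xy; apply/ffunP => a; have := eq_xy a; rewrite !inE. Qed.

Lemma card_rows_ones (P : pred {set 'I_M}) :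
  #|[set x : row | P (ones x)]| = #|[set S | P S]|.
Proof.
rewrite -(card_imset _ ones_inj); apply: eq_card => S; rewrite inE.
apply/imsetP/idP => [[x]|PS]; first by rewrite inE => Px ->.
have onesS : ones [ffun a => a \in S] = S by apply/setP => a; rewrite !inE ffunE.
by exists [ffun a => a \in S]; rewrite ?inE onesS.
Qed.

Lemma card_weight_set L : #|weight_set M L| = 'C(M, L).
Proof. by rewrite (card_rows_ones (fun S => #|S| == L)) card_draws card_ord. Qed.

Lemma card_overlap_geq L k (r : row) : r \in weight_set M L -> L <= M ->
  #|[set x | (x \in weight_set M L) && (k <= overlap r x)]| * M ^ k
    <= L ^ k * L ^ k * 'C(M, L).
Proof.
move=> rW LM; have onesr : #|ones r| = L by move: rW; rewrite inE => /eqP.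
have [kL|Lk] := leqP k L; last first.
  suff -> : [set x | (x \in weight_set M L) && (k <= overlap r x)] = set0.
    by rewrite cards0.
  apply/setP => x; rewrite !inE; apply/negbTE/andP => -[_ kr].
  have := subset_leq_card (subsetIl (ones r) (ones x)).
  by rewrite onesr; move: kr; rewrite /overlap; lia.
have supersets (K : {set 'I_M}) : #|K| = k ->
    #|[set x | (x \in weight_set M L) && (K \subset ones x)]| = 'C(M - k, L - k).
  move=> cardK; transitivity #|[set x : row | (#|ones x| == L) && (K \subset ones x)]|.
    by apply: eq_card => x; rewrite !inE.
  rewrite (card_rows_ones (fun S => (#|S| == L) && (K \subset S))).
  by rewrite card_supersets cardK ?card_ord.
apply: leq_trans (leq_mul (card_meet_geq_leq_sum (ones r) ones
  (mem (weight_set M L)) k) (leqnn _)) _.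
rewrite (eq_bigr (fun _ => 'C(M - k, L - k))); last by move=> K /andP[_ /eqP /supersets].
rewrite sum_nat_const (_ : #|_| = 'C(L, k)); last first.
  by rewrite -onesr -cards_draws; apply: eq_card => K; rewrite inE.
by rewrite -!mulnA leq_mul ?bin_leq_expn ?mul_bin_sub_expn_leq.
Qed.

Lemma card_ltn_pairs_mul2 (D : {set 'I_M}) :
  (\sum_(a < M) \sum_(b < M | a < b) ((a \in D) && (b \in D) : nat)) * 2
    = #|D| * #|D|.-1.
Proof.
have mkcond (P : 'I_M -> 'I_M -> bool) :
    \sum_(a < M) \sum_(b < M | P a b) ((a \in D) && (b \in D) : nat) =
    \sum_(a < M) \sum_(b < M) (P a b && (a \in D) && (b \in D) : nat).
  by apply: eq_bigr => a _; rewrite big_mkcond; apply: eq_bigr => b _; case: (P a b).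
have swap : \sum_(a < M) \sum_(b < M | a < b) ((a \in D) && (b \in D) : nat) =
    \sum_(a < M) \sum_(b < M) ((b < a) && (a \in D) && (b \in D) : nat).
  by rewrite mkcond exchange_big; apply: eq_bigr => a _; apply: eq_bigr => b _; rewrite andbAC.
have row_count (a : 'I_M) : \sum_(b < M) ((b < a) && (a \in D) && (b \in D) +
                                 (a < b) && (a \in D) && (b \in D) : nat)
    = (a \in D) * #|D|.-1.
  case: (boolP (a \in D)) => aD; last by rewrite big1 // => b _; rewrite !andbF.
  rewrite mul1n (cardsD1 a D) aD add1n /= -sum1_card [RHS]big_mkcond; apply: eq_bigr => b _.
  rewrite !inE !andbT -val_eqE /= neq_ltn.
  by case: ltngtP => //=; case: (b \in D).
rewrite muln2 -addnn {1}swap mkcond -big_split /=.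
under eq_bigr => a _ do rewrite -big_split row_count.
rewrite -big_distrl /=; congr (_ * _); rewrite -sum1_card [RHS]big_mkcond.
by apply: eq_bigr => b _; case: (b \in D).
Qed.

(* [cycles4 C i] unfolds to [\sum_(j | j != i) pairs (C i) (C j)]. *)
Definition pairs (x y : row) : nat :=
  \sum_(a < M) \sum_(b < M | a < b) (x a && x b && y b && y a : nat).

Lemma pairs_mul2 (x y : row) : pairs x y * 2 = overlap x y * (overlap x y).-1.
Proof.
rewrite -card_ltn_pairs_mul2; congr (_ * _); apply: eq_bigr => a _.
by apply: eq_bigr => b _; rewrite !inE; case: (x a); case: (x b); case: (y a); case: (y b).
Qed.

Lemma pairs_leq_overlap (x y : row) :
  overlap x y <= 2 -> pairs x y <= (1 < overlap x y).
Proof.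
have := pairs_mul2 x y; move: (pairs x y) (overlap x y) => p [|[|[|d]]] //=; lia.
Qed.

End Rows.

Lemma cycles4_gt_witness N M (C : bmatrix N M) (i : 'I_N) n : n < cycles4 C i ->
  (exists2 j, j != i & 2 < overlap (C i) (C j)) \/
  exists2 S : {set 'I_N}, (i \notin S) && (#|S| == n.+1) &
    {in S, forall k, 1 < overlap (C i) (C k)}.
Proof.
move=> n_lt_cyc.
have [/existsP[j /andP[ji big_ij]]|] :=
  boolP [exists j, (j != i) && (2 < overlap (C i) (C j))]; first by left; exists j.
rewrite negb_exists => /forallP small; right.
set T := [set j | (j != i) && (1 < overlap (C i) (C j))].
have cyc_T : cycles4 C i <= #|T|.
  apply: (@leq_trans (\sum_(j < N | j != i) (1 < overlap (C i) (C j)))).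
    apply: leq_sum => j ji; have := small j; rewrite ji /= -leqNgt.
    by move/pairs_leq_overlap.
  rewrite -sum1_card big_mkcond /= [X in _ <= X]big_mkcond /=; apply/eq_leq/eq_bigr => j _.
  by rewrite inE; case: (j != i); case: (1 < _).
have nT := leq_trans n_lt_cyc cyc_T.
have [S ST cardS] := exists_subset_card nT.
exists S; first by rewrite cardS eqxx andbT; apply: contraT => /negPn/(subsetP ST);
  rewrite inE eqxx.
by move=> k /(subsetP ST); rewrite inE => /andP[].
Qed.

Local Open Scope ring_scope.

Section RowProducts.
Variables (R : numDomainType) (T : finType) (q : T -> R).
Hypotheses (q_ge0 : forall x, 0 <= q x) (q_sum1 : \sum_x q x = 1).

(* Fixing the value r of row i, the sum over matrices factorises row by row
   (bigA_distr_bigA); rows outside S and i contribute \sum_x q x = 1. *)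
Lemma expect_prod_rows_leq N (f : T -> T -> R) (b : R) (S : {set 'I_N}) (i : 'I_N) :
  i \notin S -> 0 <= b -> (forall r x, 0 <= f r x) ->
  (forall r, 0 < q r -> \sum_x q x * f r x <= b) ->
  \sum_(C : {ffun 'I_N -> T}) (\prod_k q (C k)) * \prod_(k in S) f (C i) (C k)
    <= b ^+ #|S|.
Proof.
move=> iS b_ge0 f_ge0 f_leb.
pose G r k x := if k == i then (x == r)%:R else if k \in S then f r x else 1.
have prodG r (C : {ffun 'I_N -> T}) :
    \prod_k G r k (C k) = (C i == r)%:R * \prod_(k in S) f r (C k).
  rewrite (bigD1 i) //= /G eqxx; congr (_ * _).
  rewrite [RHS]big_mkcond [RHS](bigD1 i) //= (negbTE iS) mul1r.
  by apply: eq_bigr => k /negbTE ->.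
have sum_rows (C : {ffun 'I_N -> T}) :
    (\prod_k q (C k)) * \prod_(k in S) f (C i) (C k) = \sum_r \prod_k (q (C k) * G r k (C k)).
  rewrite [RHS](bigD1 (C i)) //= [X in _ + X]big1 ?addr0.
    by rewrite big_split /= prodG eqxx mul1r.
  by move=> r rCi; rewrite big_split /= prodG eq_sym (negbTE rCi) mul0r mulr0.
under eq_bigr do rewrite sum_rows.
rewrite exchange_big /=.
under eq_bigr => r _ do rewrite -(bigA_distr_bigA (fun k x => q x * G r k x)).
apply: le_trans (_ : \sum_r q r * b ^+ #|S| <= _); last by rewrite -mulr_suml q_sum1 mul1r.
apply: ler_sum => r _; rewrite (bigD1 i) //=.
have -> : \sum_x q x * G r i x = q r.
  rewrite /G eqxx (bigD1 r) //= eqxx mulr1 big1 ?addr0 // => x /negbTE ->.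
  by rewrite mulr0.
have := q_ge0 r; rewrite le_eqVlt => /orP[/eqP <-|qr_gt0]; first by rewrite !mul0r.
rewrite ler_wpM2l // (_ : \prod_(k | k != i) _ = \prod_(k in S) \sum_x q x * f r x).
  rewrite prodr_const lerXn2r ?nnegrE ?f_leb //.
  by apply: sumr_ge0 => x _; rewrite mulr_ge0.
rewrite [RHS]big_mkcond [RHS](bigD1 i) //= (negbTE iS) mul1r.
apply: eq_bigr => k /negbTE ki; rewrite /G ki; case: (k \in S) => //.
by under eq_bigr do rewrite mulr1; rewrite q_sum1.
Qed.

End RowProducts.

Section UniformRows.
Variables (R : realType) (M L : nat).
Local Notation row := {ffun 'I_M -> bool}.

Definition unif_weight (x : row) : R :=
  if x \in weight_set M L then #|weight_set M L|%:R^-1 else 0.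

Lemma PRP_unif_weight N (C : bmatrix N M) : PRP L C = \prod_k unif_weight (C k).
Proof. by []. Qed.

Lemma unif_weight_ge0 x : 0 <= unif_weight x.
Proof. by rewrite /unif_weight; case: ifP; rewrite ?invr_ge0 ?ler0n. Qed.

Lemma unif_weight_gt0 x : 0 < unif_weight x -> x \in weight_set M L.
Proof. by rewrite /unif_weight; case: ifP; rewrite ?ltxx. Qed.

Lemma sum_unif_weight : (L <= M)%N -> \sum_x unif_weight x = 1.
Proof.
move=> LM; rewrite -big_mkcond /= sumr_const -(mulr_natr _ #|_|) mulVf //.
by rewrite card_weight_set pnatr_eq0 -lt0n bin_gt0.
Qed.

Lemma expect_overlap_geq (r : row) k :
  r \in weight_set M L -> (L <= M)%N -> (0 < M)%N ->
  \sum_x unif_weight x * (k <= overlap r x)%:R <= L%:R ^+ k * L%:R ^+ k / M%:R ^+ k.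
Proof.
move=> rW LM M_gt0.
set E := [set x | (x \in weight_set M L) && (k <= overlap r x)%N].
have -> : \sum_x unif_weight x * (k <= overlap r x)%:R = #|E|%:R / #|weight_set M L|%:R.
  rewrite (eq_bigr (fun x => if x \in E then #|weight_set M L|%:R^-1 else 0)); last first.
    move=> x _; rewrite /unif_weight [x \in E]inE.
    by case: (x \in weight_set M L); case: (k <= overlap r x)%N; rewrite ?mulr1 ?mulr0 ?mul0r.
  by rewrite -big_mkcond /= sumr_const -(mulr_natl _ #|E|).
rewrite ler_pdivrMr ?ltr0n ?card_weight_set ?bin_gt0 // mulrAC.
rewrite ler_pdivlMr ?exprn_gt0 ?ltr0n // -!natrX -!natrM ler_nat.
exact: card_overlap_geq.
Qed.

End UniformRows.

Lemma Eni_leq_overlap_indicators (R : realType) N M n i (C : bmatrix N M) :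
  Eni (R:=R) n i C <= \sum_(j | j != i) (2 < overlap (C i) (C j))%N%:R
    + \sum_(S : {set 'I_N} | (i \notin S) && (#|S| == n.+1))
        \prod_(k in S) (1 < overlap (C i) (C k))%N%:R.
Proof.
have sum3_ge0 : 0 <= \sum_(j | j != i) (2 < overlap (C i) (C j))%N%:R :> R.
  by rewrite sumr_ge0.
have sum2_ge0 : 0 <= \sum_(S : {set 'I_N} | (i \notin S) && (#|S| == n.+1))
    \prod_(k in S) (1 < overlap (C i) (C k))%N%:R :> R.
  by rewrite sumr_ge0 // => S _; rewrite prodr_ge0.
rewrite /Eni; case: ifP => [/cycles4_gt_witness|_]; last exact: addr_ge0.
case=> [[j ji big_ij] | [S iS_cardS big_S]].
  apply: ler_wpDr sum2_ge0 _; rewrite (bigD1 j) //= big_ij lerDl.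
  by rewrite sumr_ge0.
apply: ler_wpDl sum3_ge0 _; rewrite (bigD1 S) //= big1 ?lerDl; last first.
  by move=> k /big_S ->.
by rewrite sumr_ge0 // => S' _; rewrite prodr_ge0.
Qed.

Section CycleBound.
Variables (R : realType) (N M L : nat).
Hypotheses (L_gt0 : (0 < L)%N) (LM : (L <= M)%N).

Let M_gt0 : (0 < M)%N := leq_trans L_gt0 LM.

Lemma expect_prod_overlap_geq (i : 'I_N) (S : {set 'I_N}) k : i \notin S ->
  \sum_(C : bmatrix N M) PRP L C * \prod_(j in S) (k <= overlap (C i) (C j))%N%:R
    <= (L%:R ^+ k * L%:R ^+ k / M%:R ^+ k : R) ^+ #|S|.
Proof.
move=> iS; under eq_bigr do rewrite PRP_unif_weight.
apply: (expect_prod_rows_leq (@unif_weight_ge0 R M L) (sum_unif_weight R LM)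
  (f := fun r x => (k <= overlap r x)%N%:R)) => //.
- by rewrite divr_ge0 ?mulr_ge0 ?exprn_ge0.
- by move=> r /unif_weight_gt0 rW; rewrite expect_overlap_geq.
Qed.

Lemma expect_sum_overlap3 i :
  \sum_(C : bmatrix N M) PRP L C * \sum_(j | j != i) (2 < overlap (C i) (C j))%N%:R
    <= N%:R * (L%:R ^+ 3 * L%:R ^+ 3 / M%:R ^+ 3 : R).
Proof.
under eq_bigr do rewrite mulr_sumr.
rewrite exchange_big /=.
apply: le_trans (_ : \sum_(j < N | j != i) (L%:R ^+ 3 * L%:R ^+ 3 / M%:R ^+ 3) <= _).
  apply: ler_sum => j ji; have iSj : i \notin [set j] by rewrite inE eq_sym.
  have -> : \sum_(C : bmatrix N M) PRP (R:=R) L C * (2 < overlap (C i) (C j))%N%:R =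
      \sum_(C : bmatrix N M)
        PRP (R:=R) L C * \prod_(k in [set j]) (2 < overlap (C i) (C k))%N%:R.
    by apply: eq_bigr => C _; rewrite big_set1.
  by have := expect_prod_overlap_geq 3 iSj; rewrite cards1 expr1.
rewrite sumr_const -(mulr_natl _ #|_|) ler_wpM2r ?divr_ge0 ?mulr_ge0 ?exprn_ge0 //.
by rewrite ler_nat (leq_trans (max_card _)) ?card_ord.
Qed.

Lemma expect_sum_overlap2_sets n i :
  \sum_(C : bmatrix N M) PRP L C *
    \sum_(S : {set 'I_N} | (i \notin S) && (#|S| == n.+1))
       \prod_(k in S) (1 < overlap (C i) (C k))%N%:R
    <= N%:R ^+ n.+1 * (L%:R ^+ 2 * L%:R ^+ 2 / M%:R ^+ 2 : R) ^+ n.+1.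
Proof.
under eq_bigr do rewrite mulr_sumr.
rewrite exchange_big /=.
apply: le_trans (_ : \sum_(S : {set 'I_N} | (i \notin S) && (#|S| == n.+1))
  (L%:R ^+ 2 * L%:R ^+ 2 / M%:R ^+ 2) ^+ n.+1 <= _).
  by apply: ler_sum => S /andP[iS /eqP <-]; apply: expect_prod_overlap_geq.
rewrite sumr_const -(mulr_natl _ #|_|) ler_wpM2r ?exprn_ge0 ?divr_ge0 ?mulr_ge0 //.
rewrite -natrX ler_nat (leq_trans _ (bin_leq_expn N n.+1)) //.
rewrite -[N in 'C(N, _)]card_ord -card_draws subset_leq_card //.
by apply/subsetP => S; rewrite unfold_in inE => /andP[].
Qed.

Lemma expect_Eni_leq n i :
  \sum_(C : bmatrix N M) PRP L C * Eni (R:=R) n i C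
    <= N%:R * L%:R ^+ 6 / M%:R ^+ 3 + (N%:R * L%:R ^+ 4 / M%:R ^+ 2) ^+ n.+1.
Proof.
have -> : N%:R * L%:R ^+ 6 / M%:R ^+ 3 = N%:R * (L%:R ^+ 3 * L%:R ^+ 3 / M%:R ^+ 3) :> R.
  by rewrite -exprD !mulrA.
have -> : (N%:R * L%:R ^+ 4 / M%:R ^+ 2) ^+ n.+1 =
    N%:R ^+ n.+1 * (L%:R ^+ 2 * L%:R ^+ 2 / M%:R ^+ 2) ^+ n.+1 :> R.
  by rewrite -exprD -exprMn !mulrA.
apply: le_trans (_ : \sum_(C : bmatrix N M) PRP L C *
  (\sum_(j | j != i) (2 < overlap (C i) (C j))%N%:R
   + \sum_(S : {set 'I_N} | (i \notin S) && (#|S| == n.+1))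
       \prod_(k in S) (1 < overlap (C i) (C k))%N%:R) <= _).
  apply: ler_sum => C _; rewrite ler_wpM2l ?Eni_leq_overlap_indicators //.
  by rewrite PRP_unif_weight prodr_ge0 // => k _; apply: unif_weight_ge0.
under eq_bigr do rewrite mulrDr.
by rewrite big_split /= lerD ?expect_sum_overlap3 ?expect_sum_overlap2_sets.
Qed.

End CycleBound.

Theorem lemma4 (R : realType) (N : nat) (p : R) (n : nat) :
  (1 <= N)%N -> 0 < p -> p < 1 ->
  let Lb := Num.truncn (`|ln p| / ln 2) in
  let Mb := Num.truncn (N%:R * p * `|ln p| / (ln 2) ^+ 2) in
  (1 <= Lb)%N -> (Lb <= Mb)%N ->
  forall i : 'I_N,
  \sum_(C : bmatrix N Mb) PRP (R:=R) Lb C * Eni (R:=R) n i C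
    <= N%:R * Lb%:R ^+ 6 / Mb%:R ^+ 3 + (N%:R * Lb%:R ^+ 4 / Mb%:R ^+ 2) ^+ n.+1.
Proof. by move=> _ _ _ Lb Mb Lb_gt0 LMb i; apply: expect_Eni_leq. Qed.
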